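(* If a path $\omega\in\Omega$ is CH-random for a computable forecasting system $\varphi$, then $\min I_\textnormal{CH}(\omega)\le\liminf_{n\to\infty}\overline{\varphi}(\omega_{1:n})$ and $\limsup_{n\to\infty}\underline{\varphi}(\omega_{1:n})\le\max I_\textnormal{CH}(\omega)$.
   Context: $\mathcal{X}=\{0,1\}$; $\Omega=\mathcal{X}^{\mathbb{N}}$ (paths); $\mathbb{S}=\bigcup_{n\ge0}\mathcal X^n$ (situations), $\omega_{1:n}=(\omega_1,\dots,\omega_n)$, $\omega_{1:0}$ the empty string. $\mathcal{I}$: nonempty closed intervals $I\subseteq[0,1]$. A forecasting system is $\varphi:\mathbb S\to\mathcal I$, $\underline\varphi=\min\varphi$, $\overline\varphi=\max\varphi$; an interval forecast $I$ is identified with the constant forecasting system $s\mapsto I$. $\varphi$ is computable if there are recursive $\underline q,\overline q:\mathbb S\times\mathbb N_0\to\mathbb Q$ with $|\underline\varphi(s)-\underline q(s,n)|<2^{-n}$ and $|\overline\varphi(s)-\overline q(s,n)|<2^{-n}$. A path $\omega$ is CH-random for $\varphi$ if for every recursive selection process $S:\mathbb S\to\{0,1\}$ with $\sum_{k=0}^{n-1}S(\omega_{1:k})\to\infty$: $\liminf_n \frac{\sum_{k<n}S(\omega_{1:k})[\omega_{k+1}-\underline\varphi(\omega_{1:k})]}{\sum_{k<n}S(\omega_{1:k})}\ge0$ and $\limsup_n \frac{\sum_{k<n}S(\omega_{1:k})[\omega_{k+1}-\overline\varphi(\omega_{1:k})]}{\sum_{k<n}S(\omega_{1:k})}\le0$.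 $\mathcal I_\textnormal{CH}(\omega)=\{I\in\mathcal I:\omega\text{ CH-random for }I\}$, $I_\textnormal{CH}(\omega)=\bigcap_{I\in\mathcal I_\textnormal{CH}(\omega)}I$. *)

From HB Require Import structures.
From mathcomp Require Import all_boot all_order all_algebra.
From mathcomp Require Import all_classical all_reals all_analysis.
From Stdlib Require List.
Set Implicit Arguments. Unset Strict Implicit. Unset Printing Implicit Defensive.
Import Order.TTheory GRing.Theory Num.Theory.
Local Open Scope ring_scope.

Inductive prf : Type :=
  | PZero
  | PSucc
  | PProj (i : nat)
  | PComp (f : prf) (gs : list prf)
  | PRec (f g : prf)
  | PMu (f : prf).

Inductive peval : prf -> seq nat -> nat -> Prop :=
  | ev_zero xs : peval PZero xs 0
  | ev_succ x xs : peval PSucc (x :: xs) x.+1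
  | ev_proj i xs : (i < size xs)%N -> peval (PProj i) xs (nth 0%N xs i)
  | ev_comp f gs xs ys y :
      List.Forall2 (fun g yi => peval g xs yi) gs ys ->
      peval f ys y -> peval (PComp f gs) xs y
  | ev_rec0 f g xs y : peval f xs y -> peval (PRec f g) (0%N :: xs) y
  | ev_recS f g n xs r y :
      peval (PRec f g) (n :: xs) r -> peval g (n :: r :: xs) y ->
      peval (PRec f g) (n.+1 :: xs) y
  | ev_mu f xs n :
      peval f (n :: xs) 0 ->
      (forall m, (m < n)%N -> exists k, peval f (m :: xs) k.+1) ->
      peval (PMu f) xs n.

(* Standard bijective coding of situations (finite binary strings). *)
Fixpoint code_sit (s : seq bool) : nat :=
  match s with
  | [::] => 0%N
  | b :: s' => ((code_sit s').*2 + 1 + b)%N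
  end.

Definition recursive_sit (f : seq bool -> nat) : Prop :=
  exists t : prf, forall s, peval t [:: code_sit s] (f s).

Definition recursive_sit_nat (f : seq bool -> nat -> nat) : Prop :=
  exists t : prf, forall s n, peval t [:: code_sit s; n] (f s n).

(* Rational numbers given as (a - b) / (d + 1) with a, b, d naturals;
   a map q : S x N -> Q is recursive iff it admits such a representation
   with recursive a, b, d. *)
Definition ratval {R : realType} (a b d : nat) : R := (a%:R - b%:R) / (d.+1)%:R.

Definition computable_real_fun {R : realType} (g : seq bool -> R) : Prop :=
  exists a b d : seq bool -> nat -> nat,
    [/\ recursive_sit_nat a, recursive_sit_nat b, recursive_sit_nat d &
      forall s n, `|g s - ratval (a s n) (b s n) (d s n)| < 2%:R ^- n].

Definition is_interval {R : realType} (I : R * R) : Prop :=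
  0 <= I.1 /\ I.1 <= I.2 /\ I.2 <= 1.

Definition forecasting_system {R : realType} (phi : seq bool -> R * R) : Prop :=
  forall s, is_interval (phi s).

Definition computable_fs {R : realType} (phi : seq bool -> R * R) : Prop :=
  computable_real_fun (fun s => (phi s).1) /\ computable_real_fun (fun s => (phi s).2).

(* omega_{1:n} for a path omega (omega_1 = omega 0). *)
Definition path_prefix (omega : nat -> bool) (n : nat) : seq bool :=
  [seq omega i | i <- iota 0 n].

Definition selection_process (S : seq bool -> bool) : Prop :=
  recursive_sit (fun s => nat_of_bool (S s)).

Definition sel_count {R : realType} (S : seq bool -> bool) (omega : nat -> bool)
  (n : nat) : R := \sum_(k < n) (S (path_prefix omega k))%:R.

Definition sel_avg {R : realType} (S : seq bool -> bool) (omega : nat -> bool)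
  (f : seq bool -> R) (n : nat) : R :=
  (\sum_(k < n) (S (path_prefix omega k))%:R * ((omega k)%:R - f (path_prefix omega k)))
  / sel_count S omega n.

Definition CH_random {R : realType} (phi : seq bool -> R * R) (omega : nat -> bool)
  : Prop :=
  forall S, selection_process S ->
    (forall M : R, exists N, forall n, (N <= n)%N -> M <= sel_count S omega n) ->
    0 <= limn_inf (sel_avg S omega (fun s => (phi s).1)) /\
    limn_sup (sel_avg S omega (fun s => (phi s).2)) <= 0.

(* I_CH(omega) as a family of intervals, and membership in its intersection. *)
Definition ICH_family {R : realType} (omega : nat -> bool) (I : R * R) : Prop :=
  is_interval I /\ CH_random (fun _ => I) omega.

Definition in_ICH {R : realType} (omega : nat -> bool) (x : R) : Prop :=
  forall I : R * R, ICH_family omega I -> I.1 <= x <= I.2.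

From Pilot Require Import Defs.
From HB Require Import structures.
From mathcomp Require Import all_boot all_order all_algebra.
From mathcomp Require Import all_classical all_reals all_analysis.
From mathcomp Require Import lra.
Import Order.TTheory GRing.Theory Num.Theory.
Set Implicit Arguments. Unset Strict Implicit. Unset Printing Implicit Defensive.

(** For a constant interval forecast [a, b], CH-randomness of omega says exactly
    that every admissible selection (recursive, selecting infinitely often along
    omega) has a relative frequency of ones with liminf >= a and limsup <= b.
    Hence I_CH(omega) = [ich_min, ich_max], where ich_min is the infimum of these
    liminfs and ich_max the supremum of these limsups.  If the liminf of the upper
    forecast along omega were below ich_min, comparing a rational approximation
    of this computable forecast with a rational threshold would give an
    admissible selection along which the upper forecast stays below ich_min by a
    fixed margin; CH-randomness for phi then pushes the limsup of the selected
    frequency below ich_min, contradicting ich_min <= liminf <= limsup.  The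
    lower forecast is handled symmetrically. *)

Lemma peval_proj0 x xs : peval (PProj 0) (x :: xs) x.
Proof. exact: (@ev_proj 0 (x :: xs)). Qed.

Lemma peval_proj1 x y xs : peval (PProj 1) (x :: y :: xs) y.
Proof. exact: (@ev_proj 1 (x :: y :: xs)). Qed.

Lemma peval_proj2 x y z xs : peval (PProj 2) (x :: y :: z :: xs) z.
Proof. exact: (@ev_proj 2 (x :: y :: z :: xs)). Qed.

Lemma peval_comp1 f g xs y z :
  peval g xs y -> peval f [:: y] z -> peval (PComp f [:: g]) xs z.
Proof. by move=> gy fz; apply: (@ev_comp _ _ _ [:: y]) => //; constructor. Qed.

Lemma peval_comp2 f g1 g2 xs y1 y2 z :
  peval g1 xs y1 -> peval g2 xs y2 -> peval f [:: y1; y2] z ->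
  peval (PComp f [:: g1; g2]) xs z.
Proof.
by move=> g1y g2y fz; apply: (@ev_comp _ _ _ [:: y1; y2]) => //; constructor => //; constructor.
Qed.

Fixpoint pconst (k : nat) : prf :=
  if k is k'.+1 then PComp PSucc [:: pconst k'] else PZero.

Lemma peval_const k xs : peval (pconst k) xs k.
Proof. by elim: k => [|k IHk]; [exact: ev_zero | exact: peval_comp1 IHk (ev_succ _ _)]. Qed.

Definition padd : prf := PRec (PProj 0) (PComp PSucc [:: PProj 1]).

Lemma peval_add m n : peval padd [:: m; n] (m + n).
Proof.
elim: m => [|m IHm]; first exact/ev_rec0/peval_proj0.
apply: ev_recS IHm _; exact: peval_comp1 (peval_proj1 _ _ _) (ev_succ _ _).
Qed.

Definition pmul : prf := PRec PZero (PComp padd [:: PProj 1; PProj 2]).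

Lemma peval_mul m n : peval pmul [:: m; n] (m * n).
Proof.
elim: m => [|m IHm]; first exact/ev_rec0/ev_zero.
apply: ev_recS IHm _; rewrite mulSn addnC.
exact: peval_comp2 (peval_proj1 _ _ _) (peval_proj2 _ _ _ _) (peval_add _ _).
Qed.

Definition ppred : prf := PRec PZero (PProj 0).

Lemma peval_pred n : peval ppred [:: n] n.-1.
Proof.
elim: n => [|n IHn]; first exact/ev_rec0/ev_zero.
apply: ev_recS IHn _; exact: peval_proj0.
Qed.

Definition psub : prf := PRec (PProj 0) (PComp ppred [:: PProj 1]).

Lemma peval_sub m n : peval psub [:: m; n] (n - m).
Proof.
elim: m => [|m IHm]; first by rewrite subn0; exact/ev_rec0/peval_proj0.
rewrite subnS; apply: ev_recS IHm _; exact: peval_comp1 (peval_proj1 _ _ _) (peval_pred _).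
Qed.

Definition psgn : prf := PRec PZero (PComp PSucc [:: PZero]).

Lemma peval_sgn n : peval psgn [:: n] (0 < n)%N.
Proof.
elim: n => [|n IHn]; first exact/ev_rec0/ev_zero.
apply: ev_recS IHn _; exact: peval_comp1 (ev_zero _) (ev_succ _ _).
Qed.

Definition pltn : prf := PComp psgn [:: PComp psub [:: PProj 0; PProj 1]].

Lemma peval_ltn m n : peval pltn [:: m; n] (m < n)%N.
Proof.
rewrite -subn_gt0; apply: peval_comp1 (peval_sgn _).
exact: peval_comp2 (peval_proj0 _ _) (peval_proj1 _ _ _) (peval_sub _ _).
Qed.

Lemma recursive_sit_const k : recursive_sit (fun _ => k).
Proof. by exists (pconst k) => s; exact: peval_const. Qed.

Lemma recursive_sit_nat_at f N : recursive_sit_nat f -> recursive_sit (f^~ N).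
Proof.
move=> [t ft]; exists (PComp t [:: PProj 0; pconst N]) => s.
exact: peval_comp2 (peval_proj0 _ _) (peval_const _ _) (ft _ _).
Qed.

Lemma recursive_sitS f : recursive_sit f -> recursive_sit (fun s => (f s).+1).
Proof.
by move=> [t ft]; exists (PComp PSucc [:: t]) => s; exact: peval_comp1 (ft s) (ev_succ _ _).
Qed.

Lemma recursive_sit_op2 (op : nat -> nat -> nat) t f g :
  (forall m n, peval t [:: m; n] (op m n)) ->
  recursive_sit f -> recursive_sit g -> recursive_sit (fun s => op (f s) (g s)).
Proof.
move=> top [tf ff] [tg fg]; exists (PComp t [:: tf; tg]) => s.
exact: peval_comp2 (ff s) (fg s) (top _ _).
Qed.

Lemma recursive_sitD f g :
  recursive_sit f -> recursive_sit g -> recursive_sit (fun s => f s + g s)%N.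
Proof. exact: recursive_sit_op2 peval_add. Qed.

Lemma recursive_sitM f g :
  recursive_sit f -> recursive_sit g -> recursive_sit (fun s => f s * g s)%N.
Proof. exact: recursive_sit_op2 peval_mul. Qed.

Lemma selection_process_ltn f g :
  recursive_sit f -> recursive_sit g -> selection_process (fun s => f s < g s)%N.
Proof. exact: recursive_sit_op2 peval_ltn. Qed.

Local Open Scope ring_scope.

Lemma ratval_ltE {R : realType} a b d a' b' d' :
  (ratval a b d < ratval a' b' d' :> R) =
  (a * d'.+1 + b' * d.+1 < a' * d.+1 + b * d'.+1)%N.
Proof.
rewrite /ratval ltr_pdivrMr // mulrAC ltr_pdivlMr // -(ltr_nat R) !natrD !natrM.
by apply/idP/idP => ?; lra.
Qed.

Lemma selection_process_ratval_lt {R : realType} (a b d a' b' d' : seq bool -> nat) :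
  recursive_sit a -> recursive_sit b -> recursive_sit d ->
  recursive_sit a' -> recursive_sit b' -> recursive_sit d' ->
  selection_process (fun s => ratval (a s) (b s) (d s) < ratval (a' s) (b' s) (d' s) :> R).
Proof.
move=> ra rb rd ra' rb' rd'.
rewrite (_ : (fun s => _) = fun s =>
    a s * (d' s).+1 + b' s * (d s).+1 < a' s * (d s).+1 + b s * (d' s).+1)%N.
  by apply: selection_process_ltn; apply: recursive_sitD;
    apply: recursive_sitM => //; exact: recursive_sitS.
by apply/funext => s; rewrite ratval_ltE.
Qed.

Section limn_inf_sup.
Variable R : realType.
Implicit Types (u v : nat -> R) (c e : R).

Lemma bounded_fun_normr_le u c : (forall n, `|u n| <= c) -> bounded_fun u.
Proof.
move=> uc; rewrite /bounded_near; near=> M => n _ /=.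
apply: le_trans (uc n) _; near: M; exact/nbhs_pinfty_ge/num_real.
Unshelve. all: end_near. Qed.

Lemma limn_inf_ge u c : bounded_fun u ->
  (exists N, forall n, (N <= n)%N -> c <= u n) -> c <= limn_inf u.
Proof.
move=> ub [N cu]; rewrite limn_infE //.
apply: le_trans (ub_le_sup (bounded_fun_has_ubound_infs ub) _); last by exists N.
apply: lb_le_inf; first by exists (u N); exists N => /=.
by move=> _ [n /= Nn <-]; exact: cu.
Qed.

Lemma limn_sup_le u c : bounded_fun u ->
  (exists N, forall n, (N <= n)%N -> u n <= c) -> limn_sup u <= c.
Proof.
move=> ub [N uc]; rewrite limn_supE //.
apply: le_trans (ge_inf (bounded_fun_has_lbound_sups ub) _) _; first by exists N.
apply: ge_sup; first by exists (u N); exists N => /=.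
by move=> _ [n /= Nn <-]; exact: uc.
Qed.

Lemma limn_inf_subr_lt u e : bounded_fun u -> 0 < e ->
  exists N, forall n, (N <= n)%N -> limn_inf u - e < u n.
Proof.
move=> ub e0; rewrite limn_infE //.
have [_ [N _ <-] lt_infs] : exists2 y, range (infs u) y & sup (range (infs u)) - e < y.
  by apply: sup_gt; [exists (infs u 0); exists 0 | rewrite ltrBlDr ltrDl].
exists N => n Nn; apply: lt_le_trans lt_infs _; apply: ge_inf; last by exists n.
exact/has_lbound_sdrop/bounded_fun_has_lbound.
Qed.

Lemma limn_sup_addr_gt u e : bounded_fun u -> 0 < e ->
  exists N, forall n, (N <= n)%N -> u n < limn_sup u + e.
Proof.
move=> ub e0; rewrite limn_supE //.
have [_ [N _ <-] sups_lt] : exists2 y, range (sups u) y & y < inf (range (sups u)) + e.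
  by apply: inf_lt; [exists (sups u 0); exists 0 | rewrite ltrDl].
exists N => n Nn; apply: le_lt_trans sups_lt; apply: ub_le_sup; last by exists n.
exact/has_ubound_sdrop/bounded_fun_has_ubound.
Qed.

Lemma limn_inf_le u c : bounded_fun u ->
  (exists N, forall n, (N <= n)%N -> u n <= c) -> limn_inf u <= c.
Proof.
move=> ub [N uc]; apply/ler_addgt0Pr => e e0.
have [M ltu] := limn_inf_subr_lt ub e0.
have := ltu (maxn N M) (leq_maxr _ _); have := uc (maxn N M) (leq_maxl _ _); lra.
Qed.

Lemma limn_inf_le_sup u : bounded_fun u -> limn_inf u <= limn_sup u.
Proof.
move=> ub; apply/ler_addgt0Pr => e e0; apply: limn_inf_le => //.
by have [N ult] := limn_sup_addr_gt ub e0; exists N => n /ult/ltW.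
Qed.

Lemma ler_limn_inf_shift u v c : bounded_fun u -> bounded_fun v ->
  (exists N, forall n, (N <= n)%N -> u n + c <= v n) -> limn_inf u + c <= limn_inf v.
Proof.
move=> ub vb [N uv]; apply/ler_addgt0Pr => e e0.
have [M ltu] := limn_inf_subr_lt ub e0.
rewrite -lerBlDr; apply: limn_inf_ge => //; exists (maxn N M) => n.
by rewrite geq_max => /andP[/uv ? /ltu ?]; lra.
Qed.

Lemma ler_limn_sup_shift u v c : bounded_fun u -> bounded_fun v ->
  (exists N, forall n, (N <= n)%N -> u n <= v n + c) -> limn_sup u <= limn_sup v + c.
Proof.
move=> ub vb [N uv]; apply/ler_addgt0Pr => e e0.
have [M vlt] := limn_sup_addr_gt vb e0.
rewrite addrAC; apply: limn_sup_le => //; exists (maxn N M) => n.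
by rewrite geq_max => /andP[/uv ? /vlt ?]; lra.
Qed.

Lemma limn_inf_shiftE u v c : bounded_fun u -> bounded_fun v ->
  (exists N, forall n, (N <= n)%N -> v n = u n + c) -> limn_inf v = limn_inf u + c.
Proof.
move=> ub vb [N vu]; apply/eqP; rewrite eq_le ler_limn_inf_shift//; last first.
  by exists N => n /vu ->.
rewrite andbT -lerBlDr; apply: ler_limn_inf_shift => //.
by exists N => n /vu ->; rewrite addrK.
Qed.

Lemma limn_sup_shiftE u v c : bounded_fun u -> bounded_fun v ->
  (exists N, forall n, (N <= n)%N -> v n = u n + c) -> limn_sup v = limn_sup u + c.
Proof.
move=> ub vb [N vu]; apply/eqP; rewrite eq_le ler_limn_sup_shift//; last first.
  by exists N => n /vu ->.
rewrite /= -lerBrDr; apply: ler_limn_sup_shift => //.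
by exists N => n /vu ->; rewrite addrK.
Qed.

Lemma limn_inf_lt_frequently u c : bounded_fun u -> limn_inf u < c ->
  forall N, exists n, (N <= n)%N /\ u n < c.
Proof.
move=> ub uc N; apply: contrapT => /forallNP never.
move: uc; rewrite ltNge => /negP; apply; apply: limn_inf_ge => //.
by exists N => n Nn; rewrite leNgt; apply/negP => unc; apply: (never n).
Qed.

Lemma limn_sup_gt_frequently u c : bounded_fun u -> c < limn_sup u ->
  forall N, exists n, (N <= n)%N /\ c < u n.
Proof.
move=> ub cu N; apply: contrapT => /forallNP never.
move: cu; rewrite ltNge => /negP; apply; apply: limn_sup_le => //.
by exists N => n Nn; rewrite leNgt; apply/negP => cun; apply: (never n).
Qed.

End limn_inf_sup.

Section computable.
Variable R : realType.
Implicit Types (g : seq bool -> R) (c e x y : R).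

Lemma exists_inv_pow2_lt e : 0 < e -> exists n : nat, 2%:R ^- n < e.
Proof.
move=> e0; have := truncnS_gt e^-1; set n := (Num.truncn e^-1).+1 => lt_n.
exists n; rewrite -[e]invrK ltf_pV2 ?posrE ?exprn_gt0 ?invr_gt0 //.
by apply: lt_trans lt_n _; rewrite -natrX ltr_nat ltn_expl.
Qed.

Lemma ratvalN a b d : ratval b a d = - ratval a b d :> R.
Proof. by rewrite /ratval -mulNr opprB. Qed.

Lemma ratval_dense x y : x < y -> exists a b d, x < ratval a b d < y.
Proof.
move=> xy; set d := Num.truncn (y - x)^-1.
(* the shift by K makes x + K nonnegative, where truncn is the floor *)
have := truncnS_gt (- x); set K := (Num.truncn (- x)).+1 => ltK.
have d0 : 0 < d.+1%:R :> R by [].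
have xK : 0 <= x + K%:R by lra.
have /andP[] := truncn_itv (mulr_ge0 xK (ltW d0)); set m := Num.truncn _ => m_le lt_mS.
exists m.+1, (K * d.+1)%N, d.
have -> : ratval m.+1 (K * d.+1) d = m.+1%:R / d.+1%:R - K%:R :> R.
  by rewrite /ratval natrM mulrBl mulfK ?gt_eqF.
have yx_d : 1 < (y - x) * d.+1%:R.
  have yx0 : 0 < y - x by rewrite subr_gt0.
  by rewrite mulrC -ltr_pdivrMr // div1r; exact: truncnS_gt.
rewrite ltrBrDr ltrBlDr ltr_pdivlMr // ltr_pdivrMr // lt_mS /= -natr1; lra.
Qed.

Lemma computable_real_funN g :
  computable_real_fun g -> computable_real_fun (fun s => - g s).
Proof.
move=> [a [b [d [ra rb rd ga]]]]; exists b, a, d; split => // s n.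
by rewrite ratvalN -opprD normrN.
Qed.

Lemma computable_lt_selection g c e : computable_real_fun g -> 0 < e ->
  exists S, [/\ selection_process S, forall s, g s < c -> S s &
                forall s, S s -> g s < c + e].
Proof.
move=> [a [b [d [ra rb rd ga]]]] e0.
(* Compare a 2^-N approximation of g, with 2^-N < e/3, to a rational threshold
   in (c + e/3, c + 2e/3): the margins e/3 absorb the approximation error. *)
have [N Ne] := exists_inv_pow2_lt (divr_gt0 e0 (ltr0n R 3)).
have [p [p' [q /andP[lt_p p_lt]]]] :
    exists a b d, c + e / 3%:R < ratval a b d < c + e * 2%:R / 3%:R.
  by apply: ratval_dense; lra.
exists (fun s => ratval (a s N) (b s N) (d s N) < ratval p p' q :> R); split.
- by apply: selection_process_ratval_lt;
    first [exact: recursive_sit_nat_at | exact: recursive_sit_const].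
- move=> s gc; have := ga s N; rewrite ltr_distl => /andP[? _]; lra.
- move=> s /= lt_r; have := ga s N; rewrite ltr_distl => /andP[_ ?]; lra.
Qed.

Lemma computable_gt_selection g c e : computable_real_fun g -> 0 < e ->
  exists S, [/\ selection_process S, forall s, c < g s -> S s &
                forall s, S s -> c - e < g s].
Proof.
move=> /computable_real_funN /(computable_lt_selection (- c)) /[apply].
move=> [S [selS gS Sg]]; exists S; split => // s.
- by move=> cg; apply: gS; rewrite ltrN2.
- by move/Sg => ?; lra.
Qed.

End computable.

(* Unqualified, [is_interval] would be MathComp-Analysis's predicate on sets. *)
Lemma is_interval_bounds {R : realType} (I : R * R) :
  Defs.is_interval I -> (0 <= I.1 <= 1) /\ (0 <= I.2 <= 1).
Proof. by case=> ? [? ?]; split; apply/andP; split => //; lra. Qed.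

Section selection.
Variables (R : realType) (omega : nat -> bool).
Local Notation prefix n := (path_prefix omega n).
Implicit Types (S : seq bool -> bool) (f : seq bool -> R) (g : nat -> R).

Definition sel_mean S g n : R :=
  (\sum_(k < n) (S (prefix k))%:R * g k) / sel_count S omega n.

Definition sel_freq S := sel_mean S (fun k => (omega k)%:R).

Definition admissible S := selection_process S /\
  forall M : R, exists N, forall n, (N <= n)%N -> M <= sel_count S omega n.

Lemma sel_avgE S f n :
  sel_avg S omega f n = sel_freq S n - sel_mean S (fun k => f (prefix k)) n.
Proof.
rewrite /sel_avg /sel_freq /sel_mean -mulrBl -sumrB.
by congr (_ / _); apply: eq_bigr => k _; rewrite mulrBr.
Qed.

Lemma sel_count_ge0 S n : 0 <= sel_count S omega n :> R.
Proof. by apply: sumr_ge0 => k _; exact: ler0n. Qed.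

Lemma sel_countS S n :
  sel_count S omega n.+1 = sel_count S omega n + (S (prefix n))%:R :> R.
Proof. exact: big_ord_recr. Qed.

Lemma sel_count_le S m n : (m <= n)%N -> sel_count S omega m <= sel_count S omega n :> R.
Proof.
move/subnK <-; elim: (n - m)%N => // k IHk.
by rewrite addSn sel_countS (le_trans IHk) ?lerDl.
Qed.

Lemma sel_mean_itv S g lo hi n : 0 < sel_count S omega n :> R ->
  (forall k, S (prefix k) -> lo <= g k <= hi) -> lo <= sel_mean S g n <= hi.
Proof.
move=> cnt0 g_itv; rewrite /sel_mean ler_pdivlMr // ler_pdivrMr // /sel_count !mulr_sumr.
apply/andP; split; apply: ler_sum => k _;
  by case: (S (prefix k)) (g_itv k) => [/(_ isT)/andP[]|_]; rewrite ?mulr1 ?mul1r ?mulr0 ?mul0r.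
Qed.

Lemma sel_mean_itv0 S g lo hi n : lo <= 0 <= hi ->
  (forall k, S (prefix k) -> lo <= g k <= hi) -> lo <= sel_mean S g n <= hi.
Proof.
move=> lo_hi g_itv; have [cnt0|cnt_neq0] := eqVneq (sel_count S omega n : R) 0.
  (* nothing selected yet: the mean is 0 / 0 = 0 *)
  by rewrite /sel_mean cnt0 invr0 mulr0.
by apply: sel_mean_itv g_itv; rewrite lt_def cnt_neq0 sel_count_ge0.
Qed.

Lemma bounded_sel_mean S g : (forall k, -1 <= g k <= 1) -> bounded_fun (sel_mean S g).
Proof.
move=> g1; apply: (@bounded_fun_normr_le _ _ 1) => n.
by rewrite ler_norml; apply: sel_mean_itv0 => [|k _]; rewrite ?lerN10 ?ler01.
Qed.

Lemma bounded_sel_avg S f : (forall s, 0 <= f s <= 1) -> bounded_fun (sel_avg S omega f).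
Proof.
move=> f01; apply: (@bounded_sel_mean S (fun k => (omega k)%:R - f (prefix k))) => k.
by have := f01 (prefix k); case: (omega k) => /= /andP[? ?]; apply/andP; split; lra.
Qed.

Lemma sel_freq_itv S n : 0 <= sel_freq S n <= 1.
Proof.
by apply: sel_mean_itv0 => [|k _]; [rewrite lexx ler01 | case: (omega k); rewrite /= ?lexx ?ler01].
Qed.

Lemma bounded_sel_freq S : bounded_fun (sel_freq S).
Proof. by apply: bounded_sel_mean => k; case: (omega k); apply/andP; split => /=; lra. Qed.

Lemma sel_count_unbounded S : (forall N, exists n, (N <= n)%N /\ S (prefix n)) ->
  forall M : R, exists N, forall n, (N <= n)%N -> M <= sel_count S omega n.
Proof.
move=> often.
have count_ge k : exists N, k%:R <= sel_count S omega N :> R.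
  elim: k => [|k [N kN]]; first by exists 0%N; exact: sel_count_ge0.
  have [n [Nn Sn]] := often N; exists n.+1.
  by rewrite sel_countS Sn -natr1 lerD2r (le_trans kN) ?sel_count_le.
move=> M; have [N kN] := count_ge (Num.truncn M).+1.
exists N => n Nn; apply: le_trans (ltW (truncnS_gt M)) _.
exact: le_trans kN (sel_count_le _ Nn).
Qed.

Lemma admissible_all : admissible (fun _ => true).
Proof.
split; first exact: selection_process_ltn (recursive_sit_const 0) (recursive_sit_const 1).
by apply: sel_count_unbounded => N; exists N.
Qed.

Lemma sel_count_gt0 S : admissible S ->
  exists N, forall n, (N <= n)%N -> 0 < sel_count S omega n :> R.
Proof. by case=> _ /(_ 1) [N cnt1]; exists N => n /cnt1; apply: lt_le_trans ltr01. Qed.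

Lemma sel_avg_cst S a : admissible S ->
  exists N, forall n, (N <= n)%N -> sel_avg S omega (fun _ => a) n = sel_freq S n + - a.
Proof.
move=> /sel_count_gt0 [N cnt0]; exists N => n /cnt0 /sel_mean_itv cnt_n.
have /cnt_n /andP[a_le le_a] : forall k, S (prefix k) -> a <= a <= a by move=> k; rewrite lexx.
by rewrite sel_avgE; congr (_ - _); apply/le_anti/andP.
Qed.

Lemma ICH_family_cstP a b : Defs.is_interval (a, b) -> ICH_family omega (a, b) <->
  forall S, admissible S -> a <= limn_inf (sel_freq S) /\ limn_sup (sel_freq S) <= b.
Proof.
move=> ab; have [a01 b01] := is_interval_bounds ab.
have shift_inf S : admissible S ->
    limn_inf (sel_avg S omega (fun _ => a)) = limn_inf (sel_freq S) + - a.
  move=> /(sel_avg_cst a); apply: limn_inf_shiftE; first exact: bounded_sel_freq.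
  exact: bounded_sel_avg.
have shift_sup S : admissible S ->
    limn_sup (sel_avg S omega (fun _ => b)) = limn_sup (sel_freq S) + - b.
  move=> /(sel_avg_cst b); apply: limn_sup_shiftE; first exact: bounded_sel_freq.
  exact: bounded_sel_avg.
split => [[_ CH] S admS | freq_ab].
  by have [] := CH S admS.1 admS.2; rewrite /= shift_inf // shift_sup //; lra.
split => // S selS cntS; have admS : admissible S by [].
by have [] := freq_ab S admS; rewrite /= shift_inf // shift_sup //; lra.
Qed.

Definition ich_min := inf [set limn_inf (sel_freq S) | S in admissible].
Definition ich_max := sup [set limn_sup (sel_freq S) | S in admissible].

Lemma limn_inf_sel_freq_ge0 S : 0 <= limn_inf (sel_freq S).
Proof.
apply: limn_inf_ge; first exact: bounded_sel_freq.
by exists 0%N => n _; have /andP[] := sel_freq_itv S n.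
Qed.

Lemma limn_sup_sel_freq_le1 S : limn_sup (sel_freq S) <= 1.
Proof.
apply: limn_sup_le; first exact: bounded_sel_freq.
by exists 0%N => n _; have /andP[] := sel_freq_itv S n.
Qed.

Lemma ich_min_le S : admissible S -> ich_min <= limn_inf (sel_freq S).
Proof.
move=> admS; apply: ge_inf; last by exists S.
by exists 0 => _ [S' _ <-]; exact: limn_inf_sel_freq_ge0.
Qed.

Lemma ich_max_ge S : admissible S -> limn_sup (sel_freq S) <= ich_max.
Proof.
move=> admS; apply: ub_le_sup; last by exists S.
by exists 1 => _ [S' _ <-]; exact: limn_sup_sel_freq_le1.
Qed.

Lemma admissible_image_neq0 (F : (seq bool -> bool) -> R) :
  ([set F S | S in admissible] !=set0)%classic.
Proof. by exists (F (fun _ => true)), (fun _ => true); first exact: admissible_all. Qed.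

Lemma ich_min_ge0 : 0 <= ich_min.
Proof.
apply: lb_le_inf (admissible_image_neq0 _) _ => _ [S _ <-].
exact: limn_inf_sel_freq_ge0.
Qed.

Lemma ich_max_le1 : ich_max <= 1.
Proof.
apply: ge_sup (admissible_image_neq0 _) _ => _ [S _ <-].
exact: limn_sup_sel_freq_le1.
Qed.

Lemma ich_min_le_max : ich_min <= ich_max.
Proof.
apply: le_trans (ich_min_le admissible_all) _; apply: le_trans (ich_max_ge admissible_all).
exact/limn_inf_le_sup/bounded_sel_freq.
Qed.

Lemma in_ICHP x : in_ICH omega x <-> ich_min <= x <= ich_max.
Proof.
have := ich_min_ge0; have := ich_max_le1; have := ich_min_le_max => min_max max_le1 min_ge0.
split => [inx | /andP[min_x x_max] [a b] [ab CH]].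
  have /andP[min_x _] : ich_min <= x <= 1.
    apply: (inx (ich_min, 1)); apply/ICH_family_cstP => [|S admS]; first by split => //=; lra.
    by split; [exact: ich_min_le | exact: limn_sup_sel_freq_le1].
  have /andP[_ x_max] : 0 <= x <= ich_max.
    apply: (inx (0, ich_max)); apply/ICH_family_cstP => [|S admS]; first by split => //=; lra.
    by split; [exact: limn_inf_sel_freq_ge0 | exact: ich_max_ge].
  by rewrite min_x x_max.
have freq_ab := (ICH_family_cstP ab).1 (conj ab CH).
have a_min : a <= ich_min.
  by apply: lb_le_inf (admissible_image_neq0 _) _ => _ [S /freq_ab [? _] <-].
have max_b : ich_max <= b.
  by apply: ge_sup (admissible_image_neq0 _) _ => _ [S /freq_ab [_ ?] <-].
by apply/andP; split => /=; lra.
Qed.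

End selection.

Arguments sel_freq {R} omega S.
Arguments admissible {R} omega S.
Arguments ich_min {R} omega.
Arguments ich_max {R} omega.

Section forecast_limits.
Variables (R : realType) (omega : nat -> bool) (phi : seq bool -> R * R).
Hypotheses (phi_fs : forecasting_system phi) (phi_CH : CH_random phi omega).
Local Notation prefix n := (path_prefix omega n).

Let forecast_bounds s : (0 <= (phi s).1 <= 1) /\ (0 <= (phi s).2 <= 1).
Proof. exact: is_interval_bounds. Qed.

Let bounded_forecast (f : seq bool -> R) : (forall s, 0 <= f s <= 1) ->
  bounded_fun (fun n => f (prefix n)).
Proof.
move=> f01; apply: (@bounded_fun_normr_le _ _ 1) => n.
by have /andP[? ?] := f01 (prefix n); rewrite ler_norml; apply/andP; split; lra.
Qed.

Lemma ich_min_le_limn_inf_max : computable_real_fun (fun s => (phi s).2) ->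
  ich_min omega <= limn_inf (fun n => (phi (prefix n)).2).
Proof.
move=> phi2_comp; set u := fun n => _.
have ub : bounded_fun u.
  by apply: (@bounded_forecast (fun s => (phi s).2)) => s; have [] := forecast_bounds s.
rewrite leNgt; apply/negP => lt_min.
set d := (ich_min omega - limn_inf u) / 3%:R.
have d0 : 0 < d by rewrite /d; lra.
have [S [selS u_S S_u]] := computable_lt_selection (limn_inf u + d) phi2_comp d0.
have cntS : forall M : R, exists N, forall n, (N <= n)%N -> M <= sel_count S omega n.
  apply: sel_count_unbounded => N.
  have [n [Nn un]] : exists n, (N <= n)%N /\ u n < limn_inf u + d.
    by apply: limn_inf_lt_frequently => //; rewrite ltrDl.
  by exists n; split => //; exact: u_S.
have admS : admissible omega S := conj selS cntS.
have [_ avg_le0] := phi_CH selS cntS.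
have : limn_sup (sel_freq omega S) <=
       limn_sup (sel_avg S omega (fun s => (phi s).2)) + (limn_inf u + d + d).
  apply: ler_limn_sup_shift; [exact: bounded_sel_freq | |].
    by apply: bounded_sel_avg => s; have [] := forecast_bounds s.
  have [N cnt0] := sel_count_gt0 admS; exists N => n /cnt0 cnt_n; rewrite sel_avgE.
  have /andP[_ mean_le] :
      0 <= sel_mean omega S (fun k => (phi (prefix k)).2) n <= limn_inf u + d + d.
    apply: sel_mean_itv cnt_n _ => k /S_u ?.
    by have [_ /andP[? _]] := forecast_bounds (prefix k); apply/andP; split; lra.
  lra.
have := ich_min_le admS; have := limn_inf_le_sup (bounded_sel_freq R omega S).
rewrite /d in d0 *; lra.
Qed.

Lemma limn_sup_min_le_ich_max : computable_real_fun (fun s => (phi s).1) ->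
  limn_sup (fun n => (phi (prefix n)).1) <= ich_max omega.
Proof.
move=> phi1_comp; set u := fun n => _.
have ub : bounded_fun u.
  by apply: (@bounded_forecast (fun s => (phi s).1)) => s; have [] := forecast_bounds s.
rewrite leNgt; apply/negP => lt_max.
set d := (limn_sup u - ich_max omega) / 3%:R.
have d0 : 0 < d by rewrite /d; lra.
have [S [selS u_S S_u]] := computable_gt_selection (limn_sup u - d) phi1_comp d0.
have cntS : forall M : R, exists N, forall n, (N <= n)%N -> M <= sel_count S omega n.
  apply: sel_count_unbounded => N.
  have [n [Nn un]] : exists n, (N <= n)%N /\ limn_sup u - d < u n.
    by apply: limn_sup_gt_frequently => //; rewrite ltrBlDr ltrDl.
  by exists n; split => //; exact: u_S.
have admS : admissible omega S := conj selS cntS.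
have [avg_ge0 _] := phi_CH selS cntS.
have : limn_inf (sel_avg S omega (fun s => (phi s).1)) + (limn_sup u - d - d) <=
       limn_inf (sel_freq omega S).
  apply: ler_limn_inf_shift; [|exact: bounded_sel_freq|].
    by apply: bounded_sel_avg => s; have [] := forecast_bounds s.
  have [N cnt0] := sel_count_gt0 admS; exists N => n /cnt0 cnt_n; rewrite sel_avgE.
  have /andP[mean_ge _] :
      limn_sup u - d - d <= sel_mean omega S (fun k => (phi (prefix k)).1) n <= 1.
    apply: sel_mean_itv cnt_n _ => k /S_u ?.
    by have [/andP[_ ?] _] := forecast_bounds (prefix k); apply/andP; split; lra.
  lra.
have := ich_max_ge admS; have := limn_inf_le_sup (bounded_sel_freq R omega S).
rewrite /d in d0 *; lra.
Qed.

End forecast_limits.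

Theorem proposition14 (R : realType) (phi : seq bool -> R * R) (omega : nat -> bool) :
  forecasting_system phi -> computable_fs phi -> CH_random phi omega ->
  (exists m : R, [/\ in_ICH omega m, (forall x, in_ICH omega x -> m <= x) &
      m <= limn_inf (fun n => (phi (path_prefix omega n)).2)]) /\
  (exists M : R, [/\ in_ICH omega M, (forall x, in_ICH omega x -> x <= M) &
      limn_sup (fun n => (phi (path_prefix omega n)).1) <= M]).
Proof.
move=> phi_fs [phi1_comp phi2_comp] phi_CH.
have min_max := ich_min_le_max R omega.
split; [exists (ich_min omega) | exists (ich_max omega)]; split.
- by apply/in_ICHP; rewrite lexx min_max.
- by move=> x /in_ICHP /andP[].
- exact: ich_min_le_limn_inf_max.
- by apply/in_ICHP; rewrite lexx min_max.
- by move=> x /in_ICHP /andP[].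
- exact: limn_sup_min_le_ich_max.
Qed.
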